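(* Let $P=\mathbb{Q}[x_1,\dots,x_n]$, let $\sigma,\tau$ be two term orderings on $\mathbb{T}^n$, let $I$ be a non-zero ideal in $P$, and let $p$ be a prime which is $\sigma$-good for $I$. (a) If $p$ is $\tau$-good for $I$, then $O_\tau(I_{(p,\sigma)})=O_\tau(I)$. (b) If $p$ is $\tau$-bad for $I$, then $O_\tau(I_{(p,\sigma)})\prec_\tau O_\tau(I)$, and moreover $O_\tau(I)$ is not a proper prefix of $O_\tau(I_{(p,\sigma)})$.
   Context: $\mathbb{T}^n$ is the monoid of power-products in $x_1,\dots,x_n$. For $f\in P$, $\operatorname{den}(f)$ is the positive lcm of the denominators of its coefficients; $\operatorname{den}(G)$ is the lcm of $\operatorname{den}(g)$, $g\in G$. For a term ordering $\rho$ with $G_\rho$ the reduced $\rho$-Gröbner basis of $I$, $p$ is $\rho$-good for $I$ if $p\nmid\operatorname{den}(G_\rho)$ and $\rho$-bad otherwise. For $\sigma$-good $p$, $\pi_p$ is coefficientwise reduction modulo $p$ into $\mathbb{F}_p[x_1,\dots,x_n]$, and $I_{(p,\sigma)}$ is the ideal of $\mathbb{F}_p[x_1,\dots,x_n]$ generated by $\pi_p(G_\sigma)$. A tuple $(t_1,\dots,t_r)$ of distinct power-products is $\tau$-ordered if $t_1<_\tau\cdots<_\tau t_r$. For an ideal $J$ in a polynomial ring over a field, $O_\tau(J)$ is the $\tau$-ordered tuple of the leading terms of a minimal $\tau$-Gröbner basis of $J$ (the minimal power-product generators of $\mathrm{LT}_\tau(J)$). For $\tau$-ordered tuples $T=(t_1,\dots,t_r)$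 and $T'=(t'_1,\dots,t'_{r'})$, $T'\prec_\tau T$ means either $T$ is a proper prefix of $T'$ (i.e. $r<r'$ and $t_i=t'_i$ for $i\le r$), or there is $k\le\min(r,r')$ with $t_i=t'_i$ for $i<k$ and $t'_k<_\tau t_k$. *)

From HB Require Import structures.
From mathcomp Require Import all_boot all_order all_algebra.
From mathcomp Require Import mpoly.

Set Implicit Arguments.
Unset Strict Implicit.
Unset Printing Implicit Defensive.

Import GRing.Theory.
Local Open Scope ring_scope.

(* Term orderings on T^n = 'X_{1..n} (monomials; multiplication of     *)
(* power-products is addition (m1 + m2)%MM of exponent vectors, and    *)
(* 1 is the zero exponent vector 0%MM).                                *)
Definition term_ordering (n : nat) (le : rel 'X_{1..n}) : Prop :=
  [/\ reflexive le, antisymmetric le, transitive le & total le] /\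
  (forall m1 m2 m : 'X_{1..n}, le m1 m2 -> le (m1 + m)%MM (m2 + m)%MM) /\
  (forall m : 'X_{1..n}, le 0%MM m).

Definition tlt (n : nat) (le : rel 'X_{1..n}) (m1 m2 : 'X_{1..n}) : bool :=
  le m1 m2 && (m1 != m2).

Definition tdvd (n : nat) (m1 m2 : 'X_{1..n}) : bool := (m1 <= m2)%MM.

(* (Only meaningful for nonzero polynomials.)                          *)
Definition tmax (n : nat) (le : rel 'X_{1..n}) (a b : 'X_{1..n}) :=
  if le a b then b else a.

Definition LT (R : ringType) (n : nat) (le : rel 'X_{1..n})
    (f : {mpoly R[n]}) : 'X_{1..n} :=
  foldr (tmax le) 0%MM (msupp f).

Definition LC (R : ringType) (n : nat) (le : rel 'X_{1..n})
    (f : {mpoly R[n]}) : R := f@_(LT le f).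

Definition is_ideal (R : ringType) (n : nat) (I : ({mpoly R[n]} -> Prop)) : Prop :=
  [/\ I 0,
      (forall f g, I f -> I g -> I (f + g))
    & (forall f g, I g -> I (f * g))].

Definition nonzero_ideal (R : ringType) (n : nat) (I : ({mpoly R[n]} -> Prop)) :=
  exists2 f, I f & f != 0.

Definition ideal_gen (R : ringType) (n : nat) (G : seq {mpoly R[n]})
    : {mpoly R[n]} -> Prop :=
  fun f => exists h : 'I_(size G) -> {mpoly R[n]},
             f = \sum_(i < size G) h i * G`_i.

Definition reduced_GB (R : ringType) (n : nat) (le : rel 'X_{1..n})
    (I : ({mpoly R[n]} -> Prop)) (G : seq {mpoly R[n]}) : Prop :=
  [/\ uniq G,
      (forall g, g \in G -> I g),
      (* LT_le(I) is generated by the leading terms of G *)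
      (forall f, I f -> f != 0 -> exists2 g, g \in G & tdvd (LT le g) (LT le f)),
      (forall g, g \in G -> g != 0 /\ LC le g = 1)
    & (* no term of g lies in the ideal generated by LT(G \ {g}) *)
      (forall g g', g \in G -> g' \in G -> g' != g ->
         forall m, m \in msupp g -> ~~ tdvd (LT le g') m)].

Definition den_poly (n : nat) (f : {mpoly rat[n]}) : nat :=
  \big[lcmn/1%N]_(m <- msupp f) `|denq f@_m|%N.

Definition den_seq (n : nat) (G : seq {mpoly rat[n]}) : nat :=
  \big[lcmn/1%N]_(g <- G) den_poly g.

Definition red_rat (p : nat) (q : rat) : 'F_p :=
  (numq q)%:~R / (denq q)%:~R.

Arguments red_rat p q : clear implicits.

Definition pi_p (p n : nat) (f : {mpoly rat[n]}) : {mpoly 'F_p[n]} :=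
  map_mpoly (red_rat p) f.

Arguments pi_p p {n} f.

Definition I_p (p n : nat) (Gsigma : seq {mpoly rat[n]}) : {mpoly 'F_p[n]} -> Prop :=
  ideal_gen (map (pi_p p) Gsigma).
Arguments I_p p {n} Gsigma _.

Definition LT_of (R : ringType) (n : nat) (le : rel 'X_{1..n})
    (J : ({mpoly R[n]} -> Prop)) (m : 'X_{1..n}) : Prop :=
  exists f, [/\ J f, f != 0 & LT le f = m].

Definition min_gen (R : ringType) (n : nat) (le : rel 'X_{1..n})
    (J : ({mpoly R[n]} -> Prop)) (m : 'X_{1..n}) : Prop :=
  LT_of le J m /\ (forall m', LT_of le J m' -> tdvd m' m -> m' = m).

Definition is_O (R : ringType) (n : nat) (le : rel 'X_{1..n})
    (J : ({mpoly R[n]} -> Prop)) (s : seq 'X_{1..n}) : Prop :=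
  sorted (tlt le) s /\ (forall m, m \in s <-> min_gen le J m).

Definition proper_prefix (n : nat) (T T' : seq 'X_{1..n}) : Prop :=
  (size T < size T')%N /\ T = take (size T) T'.

(* T' <_tau T  (0-indexed positions k) *)
Definition prec_tau (n : nat) (le : rel 'X_{1..n}) (T' T : seq 'X_{1..n}) : Prop :=
  proper_prefix T T' \/
  exists k : nat, [/\ (k < minn (size T) (size T'))%N,
                      take k T = take k T'
                    & tlt le (nth 0%MM T' k) (nth 0%MM T k)].

(* On p-integral polynomials coefficientwise reduction mod p is a ring
   morphism.  As G_sigma is monic and p-integral, division by G_sigma keeps a
   p-integral element of I p-integral, so pi_p maps the p-integral part of I
   onto I_(p,sigma).  If G_tau is p-integral too, division by G_tau shows that
   I and I_(p,sigma) have the same tau-leading terms, hence the same O_tau.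
   Otherwise let g be a non-p-integral element of G_tau with least leading
   term, and scale it by the least power of p that makes it p-integral.  Its
   reduction lies in I_(p,sigma), and as its leading coefficient vanishes mod p
   its leading term is a non-leading term u of g; by reducedness u is not a
   leading term of I.  So I_(p,sigma) has a new minimal generator below LT(g),
   and every generator of O_tau(I) lost mod p lies above a new one: the first
   position where the two sorted tuples differ carries the smaller entry of
   O_tau(I_(p,sigma)). *)

From mathcomp Require Import all_boot all_algebra.
From mathcomp Require Import mpoly ring.
From Stdlib Require Import Classical ClassicalEpsilon.

Set Implicit Arguments.
Unset Strict Implicit.
Unset Printing Implicit Defensive.

Import GRing.Theory Num.Theory.
Local Open Scope ring_scope.

Lemma exists_argmin_from (a : nat -> nat) (N : nat) :
  exists k, (N <= k)%N /\ forall k', (N <= k')%N -> (a k <= a k')%N.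
Proof.
apply: NNPP => nomin.
suff /(_ (a N) N (leqnn N) erefl) [] : forall v k, (N <= k)%N -> a k = v -> False.
elim/ltn_ind => v IHv k Nk akv; apply: nomin; exists k; split => // k' Nk'.
by rewrite leqNgt; apply/negP => lt_k'k; apply: (IHv (a k')) Nk' erefl; rewrite -akv.
Qed.

Lemma exists_nondecreasing_subseq (a : nat -> nat) :
  exists2 phi : nat -> nat,
    forall i, (phi i < phi i.+1)%N & forall i, (a (phi i) <= a (phi i.+1))%N.
Proof.
have amin N := constructive_indefinite_description _ (exists_argmin_from a N).
pose lb := fix lb i := if i is i'.+1 then (sval (amin (lb i'))).+1 else 0%N.
have lb_le i : (lb i <= sval (amin (lb i)))%N by case: (svalP (amin (lb i))).
have lt_next i : (sval (amin (lb i)) < sval (amin (lb i.+1)))%N := lb_le i.+1.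
exists (fun i => sval (amin (lb i))) => // i.
case: (svalP (amin (lb i))) => _; apply.
exact: leq_trans (lb_le i) (ltnW (lt_next i)).
Qed.

Section Dickson.
Variable n : nat.

Lemma dickson_coords (f : nat -> 'X_{1..n}) (L : seq 'I_n) :
  exists2 phi : nat -> nat, forall i, (phi i < phi i.+1)%N &
    forall j i, j \in L -> (f (phi i) j <= f (phi i.+1) j)%N.
Proof.
elim: L => [|j L [phi phi_lt phi_le]]; first by exists id.
have [psi psi_lt psi_le] := exists_nondecreasing_subseq (fun i => f (phi i) j).
exists (phi \o psi) => [i|j' i]; first exact: (homo_ltn ltn_trans phi_lt).
rewrite inE => /orP[/eqP -> |j'L]; first exact: psi_le.
have phi_le' k : (f (phi k) j' <= f (phi k.+1) j')%N := phi_le j' k j'L.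
exact: (homo_leq (r := fun x y => (x <= y)%N) leqnn leq_trans phi_le' (ltnW (psi_lt i))).
Qed.

Lemma dickson (f : nat -> 'X_{1..n}) : exists i j, (i < j)%N /\ tdvd (f i) (f j).
Proof.
have [phi phi_lt phi_le] := dickson_coords f (enum 'I_n).
exists (phi 0%N), (phi 1%N); split => //.
by apply/mnm_lepP => j; apply: phi_le; rewrite mem_enum.
Qed.

End Dickson.

Section TermOrdering.
Variables (n : nat) (le : rel 'X_{1..n}).
Hypothesis le_to : term_ordering le.
Implicit Types a m : 'X_{1..n}.

Lemma to_refl m : le m m.
Proof. by case: le_to => [[]]. Qed.

Lemma to_trans (m2 m1 m3 : 'X_{1..n}) : le m1 m2 -> le m2 m3 -> le m1 m3.
Proof. by case: le_to => [[_ _ tr _] _]; apply: tr. Qed.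

Lemma to_anti (m1 m2 : 'X_{1..n}) : le m1 m2 -> le m2 m1 -> m1 = m2.
Proof. by case: le_to => [[_ anti _ _] _] le12 le21; apply: anti; rewrite le12. Qed.

Lemma to_total (m1 m2 : 'X_{1..n}) : le m1 m2 || le m2 m1.
Proof. by case: le_to => [[_ _ _ tot] _]. Qed.

Lemma to_addr (a m1 m2 : 'X_{1..n}) : le m1 m2 -> le (m1 + a)%MM (m2 + a)%MM.
Proof. by case: le_to => [_ [mul _]]; apply: mul. Qed.

Lemma to_addl (a m1 m2 : 'X_{1..n}) : le m1 m2 -> le (a + m1)%MM (a + m2)%MM.
Proof. by rewrite !(addmC a); apply: to_addr. Qed.

Lemma to_dvd (m1 m2 : 'X_{1..n}) : tdvd m1 m2 -> le m1 m2.
Proof.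
case: le_to => [_ [_ ge0]] /submK <-.
by rewrite -{1}[m1]add0m; apply: to_addr.
Qed.

Lemma tltNge (m1 m2 : 'X_{1..n}) : tlt le m1 m2 = ~~ le m2 m1.
Proof.
rewrite /tlt; have [<-|ne12] := eqVneq m1 m2; first by rewrite to_refl.
rewrite andbT; apply/idP/idP => [le12|/negbTE le21].
  by apply: contra ne12 => le21; rewrite (to_anti le12 le21).
by have := to_total m1 m2; rewrite le21 orbF.
Qed.

Lemma tltW (m1 m2 : 'X_{1..n}) : tlt le m1 m2 -> le m1 m2.
Proof. by case/andP. Qed.

Lemma tlt_irr m : ~~ tlt le m m.
Proof. by rewrite tltNge to_refl. Qed.

Lemma le_tlt_trans (m2 m1 m3 : 'X_{1..n}) : le m1 m2 -> tlt le m2 m3 -> tlt le m1 m3.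
Proof. by rewrite !tltNge => le12; apply: contra => /to_trans; apply. Qed.

Lemma tlt_le_trans (m2 m1 m3 : 'X_{1..n}) : tlt le m1 m2 -> le m2 m3 -> tlt le m1 m3.
Proof. by rewrite !tltNge => lt12 le23; apply: contra lt12; apply: to_trans. Qed.

Lemma tlt_trans : transitive (tlt le).
Proof. by move=> m2 m1 m3 /tltW; apply: le_tlt_trans. Qed.

Lemma tlt_total (m1 m2 : 'X_{1..n}) : m1 != m2 -> tlt le m1 m2 || tlt le m2 m1.
Proof.
rewrite !tltNge -negb_and => ne12; apply: contra ne12 => /andP[le21 le12].
by rewrite (to_anti le12 le21).
Qed.

Lemma foldr_tmax_max (s : seq 'X_{1..n}) m :
  m \in s -> le m (foldr (tmax le) 0%MM s).
Proof.
elim: s => [//|k s IHs]; rewrite inE /= /tmax => /orP[/eqP->|ms].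
  by case: ifP => // _; apply: to_refl.
case: ifP => [_|]; first exact: IHs.
by move/negbT; rewrite -tltNge => /tltW; apply: to_trans (IHs ms).
Qed.

Lemma foldr_tmax_mem (s : seq 'X_{1..n}) :
  s != [::] -> foldr (tmax le) 0%MM s \in s.
Proof.
elim: s => [//|k [|k' s] IHs] _ /=; rewrite /tmax; case: ifP => lek; rewrite ?mem_head //.
  by rewrite inE (to_anti lek) ?eqxx //; case: le_to => [_ []].
by rewrite inE IHs ?orbT.
Qed.

Lemma tlt_wf : well_founded (tlt le).
Proof.
move=> m0; apply: NNPP => m0_nacc.
pose Nacc := {m | ~ Acc (tlt le) m}.
have next (m : Nacc) : {m' : Nacc | tlt le (sval m') (sval m)}.
  apply: constructive_indefinite_description; case: m => m /= m_nacc.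
  have [m' /(imply_to_and (tlt le m' m)) [lt_m'm m'_nacc]] :
    exists m', ~ (tlt le m' m -> Acc (tlt le) m').
    by apply: not_all_ex_not => acc; apply/m_nacc/Acc_intro.
  by exists (exist _ m' m'_nacc).
pose chain := fix chain i := if i is i'.+1 then sval (next (chain i')) else exist _ m0 m0_nacc.
have chain_lt i j : (i < j)%N -> tlt le (sval (chain j)) (sval (chain i)).
  apply: (homo_ltn (f := fun i => sval (chain i)) (r := fun x y => tlt le y x)).
    by move=> y x z lt_yx lt_zy; apply: tlt_trans lt_zy lt_yx.
  by move=> k; exact: svalP (next (chain k)).
have [i [j [lt_ij dvd_ij]]] := dickson (fun i => sval (chain i)).
by move: (chain_lt i j lt_ij); rewrite tltNge (to_dvd dvd_ij).
Qed.

Lemma exists_tmin (P : 'X_{1..n} -> Prop) :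
  (exists m, P m) -> exists m, P m /\ forall m', P m' -> le m m'.
Proof.
move=> [m Pm]; elim/(well_founded_ind tlt_wf): m Pm => m IHm Pm.
have [m_min|] := classic (forall m', P m' -> le m m'); first by exists m.
move=> /not_all_ex_not[m' /(imply_to_and (P m'))[Pm' /negP]].
by rewrite -tltNge => /IHm; apply.
Qed.

Lemma LT_ind (R : nzRingType) (P : {mpoly R[n]} -> Prop) : P 0 ->
  (forall f, f != 0 -> (forall g, g != 0 -> tlt le (LT le g) (LT le f) -> P g) -> P f) ->
  forall f, P f.
Proof.
move=> P0 IH f; move: {2}(LT le f) (erefl (LT le f)) => m.
elim/(well_founded_ind tlt_wf): m f => m IHm f fm.
have [->//|f0] := eqVneq f 0; apply: (IH _ f0) => g g0 lt_gf.
by apply: (IHm (LT le g) _ g erefl); rewrite -fm.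
Qed.

Section LeadingTerm.
Variable R : nzRingType.
Implicit Types (f g : {mpoly R[n]}) (J : {mpoly R[n]} -> Prop).

Lemma LT_max f m : m \in msupp f -> le m (LT le f).
Proof. exact: foldr_tmax_max. Qed.

Lemma LT_mem f : f != 0 -> LT le f \in msupp f.
Proof. by rewrite -msupp_eq0; apply: foldr_tmax_mem. Qed.

Lemma LT_eq f m : m \in msupp f -> (forall k, k \in msupp f -> le k m) -> LT le f = m.
Proof.
move=> mf fm; apply: to_anti (LT_max mf); apply/fm/LT_mem.
by apply: contraTneq mf => ->; rewrite msupp0.
Qed.

Lemma mcoeff_Xmul f a k : ('X_[a] * f)@_(a + k) = f@_k.
Proof. by rewrite -(commr_mpolyX a f) mcoeffMX. Qed.

Lemma msupp_Xmul f a : msupp ('X_[a] * f) =i [seq (a + k)%MM | k <- msupp f].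
Proof. by rewrite -(commr_mpolyX a f); apply/perm_mem/msuppMX. Qed.

Lemma Xmul_eq0 f a : ('X_[a] * f == 0) = (f == 0).
Proof.
apply/eqP/eqP => [Xf0|->]; last by rewrite mulr0.
by apply/mpolyP => k; rewrite -(mcoeff_Xmul f a) Xf0 !mcoeff0.
Qed.

Lemma LT_Xmul f a : f != 0 -> LT le ('X_[a] * f) = (a + LT le f)%MM.
Proof.
move=> f0; apply: LT_eq => [|m].
  by rewrite mcoeff_msupp mcoeff_Xmul -mcoeff_msupp LT_mem.
by rewrite msupp_Xmul => /mapP[k kf ->]; apply/to_addl/LT_max.
Qed.

Lemma LT_of_dvd J m m' : is_ideal J -> LT_of le J m -> tdvd m m' -> LT_of le J m'.
Proof.
case=> _ _ Jmul [f [Jf f0 <-]] /submK <-; exists ('X_[m' - LT le f] * f).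
by split; [exact: Jmul | rewrite Xmul_eq0 | rewrite LT_Xmul // addmC].
Qed.

Definition rstep f g := f - LC le f *: ('X_[LT le f - LT le g] * g).

Lemma rstep_ideal J f g : is_ideal J -> J f -> J g -> J (rstep f g).
Proof.
by case=> _ Jadd Jmul Jf Jg; rewrite /rstep scalerAl -mulNr; apply: Jadd (Jmul _ _ Jg).
Qed.

Lemma LT_rstep f g : LC le g = 1 -> tdvd (LT le g) (LT le f) ->
  rstep f g != 0 -> tlt le (LT le (rstep f g)) (LT le f).
Proof.
rewrite /LC => lcg /submK defLT h0; set h := rstep f g in h0 *.
have le_h m : m \in msupp h -> le m (LT le f).
  move=> /msuppB_le; rewrite mem_cat => /orP[/LT_max //|/msuppZ_le].
  by rewrite msupp_Xmul => /mapP[k kg ->]; rewrite -[X in le _ X]defLT; apply/to_addl/LT_max.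
have XgLT : ('X_[LT le f - LT le g] * g)@_(LT le f) = 1.
  by rewrite -{1}defLT mcoeff_Xmul.
have hLT : h@_(LT le f) = 0 by rewrite mcoeffB mcoeffZ XgLT mulr1 subrr.
rewrite /tlt le_h ?LT_mem //=; apply: contraTneq (LT_mem h0) => ->.
by rewrite mcoeff_msupp hLT eqxx.
Qed.

End LeadingTerm.
End TermOrdering.

Section IdealGen.
Variables (R : nzRingType) (n : nat) (G : seq {mpoly R[n]}).

Lemma ideal_gen_ideal : is_ideal (ideal_gen G).
Proof.
split.
- by exists (fun=> 0); rewrite big1 // => i _; rewrite mul0r.
- move=> _ _ [h1 ->] [h2 ->]; exists (fun i => h1 i + h2 i).
  by rewrite -big_split; apply: eq_bigr => i _; rewrite mulrDl.
- move=> f _ [h ->]; exists (fun i => f * h i).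
  by rewrite mulr_sumr; apply: eq_bigr => i _; rewrite mulrA.
Qed.

Lemma ideal_gen_mul (h g : {mpoly R[n]}) : g \in G -> ideal_gen G (h * g).
Proof.
move=> gG; pose i0 := Ordinal (etrans (index_mem g G) gG).
exists (fun i => if i == i0 then h else 0).
rewrite (bigD1 i0) //= eqxx nth_index // big1 ?addr0 // => i /negbTE ->.
by rewrite mul0r.
Qed.

End IdealGen.

Section MinimalGenerators.
Variables (R : nzRingType) (n : nat) (le : rel 'X_{1..n}) (J : {mpoly R[n]} -> Prop).
Hypothesis le_to : term_ordering le.

Lemma exists_min_gen m : LT_of le J m -> exists m', min_gen le J m' /\ tdvd m' m.
Proof.
move: {2}(mdeg m) (erefl (mdeg m)) => d; elim/ltn_ind: d m => d IHd m md Jm.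
have [m_min|] := classic (forall m', LT_of le J m' -> tdvd m' m -> m' = m).
  by exists m; split => //; apply: lepm_refl.
move=> /not_all_ex_not[m' /(imply_to_and (LT_of le J m'))[Jm' /(imply_to_and (tdvd m' m))]].
move=> [dvd_m'm ne_m'm]; have lt_d : (mdeg m' < d)%N.
  rewrite -md -(submK dvd_m'm) mdegD -{1}[mdeg m']add0n ltn_add2r lt0n mdeg_eq0.
  by apply: contra_notN ne_m'm => /eqP m0; rewrite -(submK dvd_m'm) m0 add0m.
have [m'' [min_m'' dvd_m''m']] := IHd _ lt_d m' erefl Jm'.
by exists m''; split => //; apply: lepm_trans dvd_m'm.
Qed.

Lemma not_min_gen_dvd t : LT_of le J t -> ~ min_gen le J t ->
  exists v, [/\ min_gen le J v, tdvd v t & v != t].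
Proof.
move=> Jt /(not_and_or (LT_of le J t))[//|/not_all_ex_not[w]].
move=> /(imply_to_and (LT_of le J w))[Jw /(imply_to_and (tdvd w t))[dvd_wt ne_wt]].
have [v [min_v dvd_vw]] := exists_min_gen Jw.
exists v; split => //; first exact: lepm_trans dvd_wt.
apply: contra_notN ne_wt => /eqP vt.
by apply: (to_anti le_to); apply: (to_dvd le_to); rewrite // -vt.
Qed.

End MinimalGenerators.

Section ReducedGroebnerBasis.
Variables (R : nzRingType) (n : nat) (le : rel 'X_{1..n}).
Variables (J : {mpoly R[n]} -> Prop) (G : seq {mpoly R[n]}).
Hypotheses (le_to : term_ordering le) (GB : reduced_GB le J G).

Lemma LT_of_GB g : g \in G -> LT_of le J (LT le g).
Proof.
by case: GB => _ GJ _ Gmonic _ gG; exists g; split; [apply: GJ | case: (Gmonic g gG) |].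
Qed.

Lemma GB_dvd m : LT_of le J m -> exists2 g, g \in G & tdvd (LT le g) m.
Proof. by case: GB => _ _ GLT _ _ [f [Jf f0 <-]]; apply: GLT. Qed.

Lemma GB_tail_notin g u : g \in G -> u \in msupp g -> tlt le u (LT le g) ->
  ~ LT_of le J u.
Proof.
case: GB => _ _ _ _ Greduced gG ug lt_ug /GB_dvd[g' g'G dvd_g'u].
have [g'g|ne_g'g] := eqVneq g' g.
  by move: lt_ug; rewrite (tltNge le_to) -g'g (to_dvd le_to dvd_g'u).
by move: (Greduced _ _ gG g'G ne_g'g u ug); rewrite dvd_g'u.
Qed.

Lemma GB_min_gen g : g \in G -> min_gen le J (LT le g).
Proof.
move=> gG; split=> [|m Jm dvd_m]; first exact: LT_of_GB.
have [g' g'G dvd_g'm] := GB_dvd Jm; case: GB => _ _ _ Gmonic Greduced.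
have [g'g|ne_g'g] := eqVneq g' g.
  by apply: (to_anti le_to); apply: (to_dvd le_to); rewrite // -g'g.
have g0 : g != 0 by case: (Gmonic g gG).
by case/negP: (Greduced _ _ gG g'G ne_g'g _ (LT_mem le_to g0)); apply: lepm_trans dvd_m.
Qed.

Lemma min_gen_GB t : min_gen le J t -> exists2 g, g \in G & LT le g = t.
Proof.
case=> Jt t_min; have [g gG dvd_gt] := GB_dvd Jt.
by exists g => //; apply: t_min dvd_gt; apply: LT_of_GB.
Qed.

End ReducedGroebnerBasis.

Section SortedLists.
Variables (T : eqType) (r : rel T) (x0 : T).
Hypotheses (r_irr : irreflexive r) (r_tr : transitive r).
Hypothesis r_total : forall x y, x != y -> r x y || r y x.

Let r_neq x y : r x y -> x != y.
Proof. by apply: contraTneq => ->; rewrite r_irr. Qed.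

Lemma sorted_first_difference (s t : seq T) : sorted r s -> sorted r t ->
  (exists v, [/\ v \in t, v \notin s & has (r v) s]) ->
  (forall x, x \in s -> x \notin t -> exists v, [/\ v \in t, v \notin s & r v x]) ->
  exists k, [/\ (k < minn (size s) (size t))%N, take k s = take k t
              & r (nth x0 t k) (nth x0 s k)].
Proof.
elim: s t => [|x s IHs] [|y t] /= s_sorted t_sorted [v [vt vs v_lt]] s_t //.
have lt_x := order_path_min r_tr s_sorted; have lt_y := order_path_min r_tr t_sorted.
have [xy|ne_xy] := eqVneq x y; last first.
  exists 0%N; rewrite minnSS; split=> //=; case/orP: (r_total ne_xy) => // lt_xy.
  have xNt : x \notin y :: t.
    rewrite inE negb_or ne_xy; apply/negP => /(allP lt_y) lt_yx.
    by have := r_tr lt_xy lt_yx; rewrite r_irr.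
  have [w [wt _ lt_wx]] := s_t x (mem_head _ _) xNt.
  case/predU1P: wt => [wy|wt]; first by have := r_tr lt_wx lt_xy; rewrite wy r_irr.
  by have := r_tr (r_tr (allP lt_y w wt) lt_wx) lt_xy; rewrite r_irr.
subst y.
have tail_new : exists v, [/\ v \in t, v \notin s & has (r v) s].
  move: vs vt; rewrite !inE negb_or => /andP[ne_vx vs]; rewrite (negbTE ne_vx) => vt.
  exists v; split=> //; case/orP: v_lt => [lt_vx|//].
  by have := r_tr (allP lt_y v vt) lt_vx; rewrite r_irr.
have tail_lost z : z \in s -> z \notin t -> exists v, [/\ v \in t, v \notin s & r v z].
  move=> zs zt; have ne_zx : z != x by rewrite eq_sym r_neq ?(allP lt_x).
  have zs' : z \in x :: s by rewrite inE zs orbT.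
  have zt' : z \notin x :: t by rewrite inE negb_or ne_zx.
  have [w [wt ws lt_wz]] := s_t z zs' zt'.
  move: ws; rewrite inE negb_or => /andP[ne_wx ws]; rewrite inE (negbTE ne_wx) in wt.
  by exists w.
have [k [lt_k take_k lt_nth]] :=
  IHs t (path_sorted s_sorted) (path_sorted t_sorted) tail_new tail_lost.
by exists k.+1; rewrite /= minnSS ltnS take_k.
Qed.

End SortedLists.

Section LeadingTermTuples.
Variables (R R' : nzRingType) (n : nat) (le : rel 'X_{1..n}).
Hypothesis le_to : term_ordering le.
Variables (J : {mpoly R[n]} -> Prop) (J' : {mpoly R'[n]} -> Prop).

Lemma min_gen_ext : (forall m, LT_of le J m <-> LT_of le J' m) ->
  forall m, min_gen le J m <-> min_gen le J' m.
Proof.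
move=> JJ' m; split=> -[Jm m_min]; split=> [|m' /JJ']; by [apply/JJ' | apply: m_min].
Qed.

Lemma is_O_eq s s' : is_O le J s -> is_O le J' s' ->
  (forall m, min_gen le J m <-> min_gen le J' m) -> s = s'.
Proof.
move=> [s_sorted s_mem] [s'_sorted s'_mem] JJ'.
apply: (irr_sorted_eq (tlt_trans le_to)) => // [m|m].
  by rewrite (negbTE (tlt_irr le_to m)).
by apply/idP/idP => [/s_mem/JJ'/s'_mem|/s'_mem/JJ'/s_mem].
Qed.

Lemma is_O_prec s s' : is_O le J s -> is_O le J' s' ->
  (exists v, [/\ min_gen le J' v, ~ min_gen le J v &
     exists2 w, min_gen le J w & tlt le v w]) ->
  (forall x, min_gen le J x -> ~ min_gen le J' x ->
     exists v, [/\ min_gen le J' v, ~ min_gen le J v & tlt le v x]) ->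
  prec_tau le s' s /\ ~ proper_prefix s s'.
Proof.
move=> [s_sorted s_mem] [s'_sorted s'_mem] [v [J'v Jv [w Jw lt_vw]]] J_J'.
have tlt_irrefl : irreflexive (tlt le) by move=> m; apply/negbTE/tlt_irr.
have new_below : exists v, [/\ v \in s', v \notin s & has (tlt le v) s].
  exists v; split; first exact/s'_mem; first by apply/negP => /s_mem.
  by apply/hasP; exists w => //; apply/s_mem.
have lost_above x : x \in s -> x \notin s' -> exists v, [/\ v \in s', v \notin s & tlt le v x].
  move=> /s_mem Jx xNs'; have [|u [J'u Ju lt_ux]] := J_J' x Jx.
    by move/s'_mem; apply/negP.
  by exists u; split=> //; [apply/s'_mem | apply/negP => /s_mem].
have [k [lt_k take_k lt_nth]] := sorted_first_difference 0%MM tlt_irrefl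
  (tlt_trans le_to) (tlt_total le_to) s_sorted s'_sorted new_below lost_above.
split=> [|[_ s_prefix]]; first by right; exists k.
by move: lt_nth; rewrite s_prefix nth_take ?tlt_irrefl // (leq_trans lt_k) ?geq_minl.
Qed.

End LeadingTermTuples.

Section PIntegralRat.
Variable p : nat.
Hypothesis p_pr : prime p.

Lemma prime_dvd_lcm a b : (p %| lcmn a b)%N = (p %| a)%N || (p %| b)%N.
Proof.
apply/idP/idP => [pab|/orP[pa|pb]].
- rewrite -Euclid_dvdM //; apply: dvdn_trans pab _.
  by rewrite dvdn_lcm dvdn_mulr ?dvdn_mull.
- exact: dvdn_trans pa (dvdn_lcml a b).
- exact: dvdn_trans pb (dvdn_lcmr a b).
Qed.

Lemma prime_dvd_biglcm (T : Type) (r : seq T) (F : T -> nat) :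
  (p %| \big[lcmn/1%N]_(x <- r) F x)%N = has (fun x => p %| F x)%N r.
Proof.
elim: r => [|x r IHr]; last by rewrite big_cons prime_dvd_lcm IHr.
by rewrite big_nil dvdn1 eqn_leq leqNgt prime_gt1.
Qed.

Definition pint (q : rat) : bool := ~~ (p %| `|denq q|)%N.

Lemma Fp_intr_eq0 (z : int) : (z%:~R == 0 :> 'F_p) = (p %| `|z|)%N.
Proof. by rewrite -(dvdz_pcharf (pchar_Fp p_pr)). Qed.

Lemma numq_mul_eq (q : rat) (x y : int) :
  q * y%:~R = x%:~R -> numq q * y = x * denq q.
Proof.
move=> qy; apply: (@intr_inj rat); rewrite !rmorphM /= numqE -qy.
by rewrite mulrAC.
Qed.

Lemma denq_dvd_mul (q : rat) (x y : int) :
  q * y%:~R = x%:~R -> (denq q %| y)%Z.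
Proof.
move=> /numq_mul_eq qy.
have : (denq q %| numq q * y)%Z by rewrite qy dvdz_mull.
by rewrite Gauss_dvdzr // /coprimez gcdzC; apply: coprime_num_den.
Qed.

Lemma pint_frac (q : rat) (x y : int) :
  ~~ (p %| `|y|)%N -> q * y%:~R = x%:~R -> pint q.
Proof.
move=> p_y /denq_dvd_mul dy; apply: contra p_y => p_d.
exact: dvdn_trans p_d dy.
Qed.

Lemma red_rat_frac (q : rat) (x y : int) :
  ~~ (p %| `|y|)%N -> q * y%:~R = x%:~R -> red_rat p q = x%:~R / y%:~R.
Proof.
move=> p_y qy; have p_d := pint_frac p_y qy.
have /(congr1 (fun z : int => z%:~R : 'F_p)) := numq_mul_eq qy.
rewrite !rmorphM /= => qyFp.
by apply/eqP; rewrite eqr_div ?Fp_intr_eq0 // qyFp.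
Qed.

Lemma pint_denqM (a b : rat) :
  pint a -> pint b -> ~~ (p %| `|(denq a * denq b)%R|)%N.
Proof. by move=> pa pb; rewrite abszM Euclid_dvdM // negb_or; apply/andP. Qed.

Lemma pint_denq_neq0 (a : rat) : pint a -> (denq a)%:~R != 0 :> 'F_p.
Proof. by rewrite Fp_intr_eq0. Qed.

Let sum_frac (a b : rat) :
  (a + b) * (denq a * denq b)%:~R = (numq a * denq b + numq b * denq a)%:~R.
Proof. by rewrite !rmorphD !rmorphM /= !numqE; ring. Qed.

Let prod_frac (a b : rat) :
  (a * b) * (denq a * denq b)%:~R = (numq a * numq b)%:~R.
Proof. by rewrite !rmorphM /= !numqE; ring. Qed.

Lemma pintD (a b : rat) : pint a -> pint b -> pint (a + b).
Proof. by move=> pa pb; apply: pint_frac (pint_denqM pa pb) (sum_frac a b). Qed.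

Lemma red_ratD (a b : rat) : pint a -> pint b ->
  red_rat p (a + b) = red_rat p a + red_rat p b.
Proof.
move=> pa pb; rewrite (red_rat_frac (pint_denqM pa pb) (sum_frac a b)) /red_rat.
move: (pint_denq_neq0 pa) (pint_denq_neq0 pb) => da db.
by rewrite !rmorphD !rmorphM /=; field; rewrite da db.
Qed.

Lemma pintM (a b : rat) : pint a -> pint b -> pint (a * b).
Proof. by move=> pa pb; apply: pint_frac (pint_denqM pa pb) (prod_frac a b). Qed.

Lemma red_ratM (a b : rat) : pint a -> pint b ->
  red_rat p (a * b) = red_rat p a * red_rat p b.
Proof.
move=> pa pb; rewrite (red_rat_frac (pint_denqM pa pb) (prod_frac a b)) /red_rat.
move: (pint_denq_neq0 pa) (pint_denq_neq0 pb) => da db.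
by rewrite !rmorphM /=; field; rewrite da db.
Qed.

Lemma pint_int (z : int) : pint z%:~R.
Proof. by rewrite /pint denq_int dvdn1 eqn_leq leqNgt prime_gt1. Qed.

Lemma red_rat_int (z : int) : red_rat p z%:~R = z%:~R.
Proof. by rewrite /red_rat denq_int divr1 -[z%:~R]/(z%:Q) numq_int. Qed.

Lemma pint_nat (k : nat) : pint k%:R.
Proof. exact: pint_int k. Qed.

Lemma pint0 : pint 0.
Proof. exact: pint_nat 0. Qed.

Lemma red_rat_nat (k : nat) : red_rat p k%:R = k%:R.
Proof. exact: red_rat_int k. Qed.

Lemma red_rat1 : red_rat p 1 = 1.
Proof. exact: red_rat_nat 1. Qed.

Lemma pintN (a : rat) : pint a -> pint (- a).
Proof. by rewrite /pint denqN. Qed.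

Lemma red_ratN (a : rat) : red_rat p (- a) = - red_rat p a.
Proof. by rewrite /red_rat numqN denqN rmorphN mulNr. Qed.

Lemma red_rat_mulp_neq0 (r : rat) :
  pint (p%:R * r) -> ~~ pint r -> red_rat p (p%:R * r) != 0.
Proof.
move=> ps; apply: contraNN; set s := p%:R * r => s0.
have : (numq s)%:~R == 0 :> 'F_p.
  by move: s0; rewrite mulf_eq0 invr_eq0 (negbTE (pint_denq_neq0 ps)) orbF.
rewrite Fp_intr_eq0 => dvd_num.
apply: (pint_frac ps (x := (numq s %/ p)%Z)).
apply: (@mulIf _ p%:R); first by rewrite pnatr_eq0 -lt0n prime_gt0.
have -> : (numq s %/ p)%Z%:~R * p%:R = (numq s)%:~R :> rat.
  by rewrite -{2}(@divzK p _ dvd_num) rmorphM /= -pmulrn.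
by rewrite numqE /s; ring.
Qed.

Lemma red_rat0 : red_rat p 0 = 0.
Proof. by rewrite /red_rat mul0r. Qed.

Lemma pint_sum (I : Type) (r : seq I) (P : pred I) (F : I -> rat) :
  (forall i, P i -> pint (F i)) -> pint (\sum_(i <- r | P i) F i).
Proof.
by move=> pF; apply: (big_ind pint) => //; [exact: pint0 | exact: pintD].
Qed.

Lemma red_rat_sum (I : Type) (r : seq I) (P : pred I) (F : I -> rat) :
  (forall i, P i -> pint (F i)) ->
  red_rat p (\sum_(i <- r | P i) F i) = \sum_(i <- r | P i) red_rat p (F i).
Proof.
move=> pF; apply: proj2 (big_ind2 (fun x y => pint x /\ red_rat p x = y) _ _ _).
- by rewrite red_rat0; split => //; exact: pint0.
- by move=> x1 x2 y1 y2 [p1 <-] [p2 <-]; rewrite pintD ?red_ratD.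
- by move=> i /pF.
Qed.

End PIntegralRat.

Lemma mcoeff_map_mpoly0 (n : nat) (R S : nzRingType) (f : R -> S)
    (q : {mpoly R[n]}) (m : 'X_{1..n}) :
  f 0 = 0 -> (map_mpoly f q)@_m = f q@_m.
Proof.
move=> f0; rewrite /map_mpoly /mmap raddf_sum /=.
under eq_bigr do rewrite mmap1_id mcoeffCM mcoeffX.
have [mq|mNq] := boolP (m \in msupp q).
  rewrite (big_rem m mq) /= eqxx mulr1 big1_seq ?addr0 // => k /andP[_].
  by rewrite mem_rem_uniq ?msupp_uniq // inE => /andP[/negbTE -> _]; rewrite mulr0.
rewrite memN_msupp_eq0 // f0 big1_seq // => k /andP[_ kq].
by case: eqP kq mNq => [-> ->|_ _ _]; rewrite ?mulr0.
Qed.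

Section ModP.
Variables (p n : nat).
Hypothesis p_pr : prime p.
Implicit Types f g : {mpoly rat[n]}.

Definition mpint f : bool := all (fun m => pint p f@_m) (msupp f).

Lemma mpintP f : reflect (forall m, pint p f@_m) (mpint f).
Proof.
apply: (iffP allP) => [pf m|pf m _]; last exact: pf.
have [/pf //|mNf] := boolP (m \in msupp f).
by rewrite memN_msupp_eq0 //; exact: (pint0 p_pr).
Qed.

Lemma mcoeff_pi_p f m : (pi_p p f)@_m = red_rat p f@_m.
Proof. exact/mcoeff_map_mpoly0/red_rat0. Qed.

Lemma pi_pE f q : (forall m, red_rat p f@_m = q@_m) -> pi_p p f = q.
Proof. by move=> fq; apply/mpolyP => m; rewrite mcoeff_pi_p. Qed.

Lemma pi_p0 : pi_p p (0 : {mpoly rat[n]}) = 0.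
Proof. by apply: pi_pE => m; rewrite !mcoeff0 red_rat0. Qed.

Lemma mpintD f g : mpint f -> mpint g -> mpint (f + g).
Proof.
move=> /mpintP pf /mpintP pg; apply/mpintP => m.
by rewrite mcoeffD; apply: pintD.
Qed.

Lemma pi_pD f g : mpint f -> mpint g -> pi_p p (f + g) = pi_p p f + pi_p p g.
Proof.
move=> /mpintP pf /mpintP pg; apply: pi_pE => m.
by rewrite mcoeffD red_ratD // mcoeffD; congr (_ + _); rewrite mcoeff_pi_p.
Qed.

Lemma mpintN f : mpint f -> mpint (- f).
Proof.
by move=> /mpintP pf; apply/mpintP => m; rewrite mcoeffN; apply: pintN.
Qed.

Lemma pi_pN f : pi_p p (- f) = - pi_p p f.
Proof. by apply: pi_pE => m; rewrite !mcoeffN red_ratN mcoeff_pi_p. Qed.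

Lemma mpintB f g : mpint f -> mpint g -> mpint (f - g).
Proof. by move=> pf pg; rewrite mpintD ?mpintN. Qed.

Lemma pi_pB f g : mpint f -> mpint g -> pi_p p (f - g) = pi_p p f - pi_p p g.
Proof. by move=> pf pg; rewrite pi_pD ?mpintN // pi_pN. Qed.

Lemma mpintM f g : mpint f -> mpint g -> mpint (f * g).
Proof.
move=> /mpintP pf /mpintP pg; apply/mpintP => m.
by rewrite mcoeffM; apply: (pint_sum p_pr) => k _; apply: pintM.
Qed.

Lemma pi_pM f g : mpint f -> mpint g -> pi_p p (f * g) = pi_p p f * pi_p p g.
Proof.
move=> /mpintP pf /mpintP pg; apply: pi_pE => m.
rewrite mcoeffM (red_rat_sum p_pr) => [|k _]; last exact: pintM.
rewrite mcoeffM; apply: eq_bigr => k _.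
by rewrite red_ratM //; congr (_ * _); rewrite mcoeff_pi_p.
Qed.

Lemma mpintZ c f : pint p c -> mpint f -> mpint (c *: f).
Proof.
move=> pc /mpintP pf; apply/mpintP => m.
by rewrite mcoeffZ; apply: pintM.
Qed.

Lemma pi_pZ c f : pint p c -> mpint f -> pi_p p (c *: f) = red_rat p c *: pi_p p f.
Proof.
move=> pc /mpintP pf; apply: pi_pE => m.
by rewrite !mcoeffZ red_ratM // mcoeff_pi_p.
Qed.

Lemma mpintX m : mpint 'X_[m].
Proof. by apply/mpintP => k; rewrite mcoeffX; exact: pint_nat. Qed.

Lemma pi_pX m : pi_p p 'X_[m] = 'X_[m] :> {mpoly 'F_p[n]}.
Proof.
by apply: pi_pE => k; rewrite !mcoeffX red_rat_nat.
Qed.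

Lemma mpint_sum (I : Type) (r : seq I) (P : pred I) (F : I -> {mpoly rat[n]}) :
  (forall i, P i -> mpint (F i)) -> mpint (\sum_(i <- r | P i) F i).
Proof.
move=> pF; apply: (big_ind mpint) => //; last exact: mpintD.
by apply/mpintP => m; rewrite mcoeff0; exact: (pint0 p_pr).
Qed.

Lemma pi_p_sum (I : Type) (r : seq I) (P : pred I) (F : I -> {mpoly rat[n]}) :
  (forall i, P i -> mpint (F i)) ->
  pi_p p (\sum_(i <- r | P i) F i) = \sum_(i <- r | P i) pi_p p (F i).
Proof.
move=> pF; apply: proj2 (big_ind2 (fun x y => mpint x /\ pi_p p x = y) _ _ _).
- split; last exact: pi_p0.
  by apply/mpintP => m; rewrite mcoeff0; exact: (pint0 p_pr).
- by move=> x1 x2 y1 y2 [p1 <-] [p2 <-]; rewrite mpintD ?pi_pD.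
- by move=> i /pF.
Qed.

Definition lift_Fp (q : {mpoly 'F_p[n]}) : {mpoly rat[n]} :=
  map_mpoly (fun c : 'F_p => (val c)%:R) q.

Lemma mpint_lift_Fp q : mpint (lift_Fp q).
Proof.
apply/mpintP => m; rewrite mcoeff_map_mpoly0 //.
exact: pint_nat.
Qed.

Lemma pi_p_lift_Fp q : pi_p p (lift_Fp q) = q.
Proof.
apply: pi_pE => m; rewrite mcoeff_map_mpoly0 //.
by rewrite red_rat_nat natr_Zp.
Qed.

Lemma dvd_den_poly (f : {mpoly rat[n]}) : (p %| den_poly f)%N = ~~ mpint f.
Proof.
rewrite /den_poly (prime_dvd_biglcm p_pr) /mpint -has_predC.
by apply: eq_has => m; rewrite /= negbK.
Qed.

Lemma dvd_den_seq (G : seq {mpoly rat[n]}) : (p %| den_seq G)%N = ~~ all mpint G.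
Proof.
rewrite /den_seq (prime_dvd_biglcm p_pr) -has_predC.
by apply: eq_has => g; rewrite /= dvd_den_poly.
Qed.

Lemma den_poly_gt0 (f : {mpoly rat[n]}) : (0 < den_poly f)%N.
Proof.
apply: (big_ind (fun d => 0 < d)%N) => // [d1 d2|m _]; first by rewrite lcmn_gt0 => ->.
by rewrite absz_gt0 denq_neq0.
Qed.

Lemma exists_mpint_scale (f : {mpoly rat[n]}) : exists K, mpint (p%:R ^+ K *: f).
Proof.
have [D' p'D' defD] := pfactor_coprime p_pr (den_poly_gt0 f).
exists (logn p (den_poly f)); apply/mpintP => m; rewrite mcoeffZ.
have [mf|mNf] := boolP (m \in msupp f); last first.
  by rewrite memN_msupp_eq0 // mulr0 pint0.
have /dvdnP[e defDm] : (`|denq f@_m| %| den_poly f)%N.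
  by rewrite /den_poly (big_rem m mf) dvdn_lcml.
apply: (@pint_frac p _ (numq f@_m * e) D').
  by rewrite -prime_coprime.
have Dfm : (den_poly f)%:R = e%:R * (denq f@_m)%:~R :> rat.
  by rewrite defDm natrM -[in RHS]absz_denq.
have -> : (numq f@_m * e)%:~R = f@_m * (den_poly f)%:R :> rat.
  by rewrite Dfm rmorphM /= numqE -pmulrn; ring.
by rewrite [in RHS]defD natrM natrX -pmulrn mulrAC mulrC (mulrC D'%:R).
Qed.

Lemma exists_bad_scale f : ~~ mpint f ->
  exists k, mpint (p%:R ^+ k.+1 *: f) /\ ~~ mpint (p%:R ^+ k *: f).
Proof.
move=> f_bad; have [[|k] pK K_min] := ex_minnP (exists_mpint_scale f).
  by rewrite expr0 scale1r (negbTE f_bad) in pK.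
by exists k; split => //; apply/negP => /K_min; rewrite ltnn.
Qed.

Lemma msupp_pi_p f : {subset msupp (pi_p p f) <= msupp f}.
Proof.
move=> m; rewrite !mcoeff_msupp mcoeff_pi_p; apply: contra_neq => ->.
exact: red_rat0.
Qed.

Lemma pi_p_scale_neq0 f : mpint (p%:R *: f) -> ~~ mpint f -> pi_p p (p%:R *: f) != 0.
Proof.
move=> ppf /allPn[m _ pfm].
have ppfm : pint p (p%:R * f@_m) by rewrite -mcoeffZ; apply/mpintP.
apply: contraTneq (red_rat_mulp_neq0 p_pr ppfm pfm) => ppf0.
by rewrite -mcoeffZ -mcoeff_pi_p ppf0 mcoeff0 eqxx.
Qed.

Section ReductionStep.
Variable le : rel 'X_{1..n}.
Hypothesis le_to : term_ordering le.

Lemma LT_pi_p f : red_rat p (LC le f) != 0 ->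
  pi_p p f != 0 /\ LT le (pi_p p f) = LT le f.
Proof.
move=> LCf0; have LTf : LT le f \in msupp (pi_p p f) by rewrite mcoeff_msupp mcoeff_pi_p.
split; first by apply: contraTneq LTf => ->; rewrite msupp0.
by apply: (LT_eq le_to LTf) => k /msupp_pi_p; apply: LT_max.
Qed.

Lemma mpint_rstep f g : mpint f -> mpint g -> mpint (rstep le f g).
Proof.
move=> pf pg; have pLC : pint p (LC le f) by apply/mpintP.
by rewrite mpintB ?mpintZ ?mpintM ?mpintX.
Qed.

Lemma pi_p_rstep f g : mpint f -> mpint g ->
  pi_p p (rstep le f g) =
  pi_p p f - red_rat p (LC le f) *: ('X_[LT le f - LT le g] * pi_p p g).
Proof.
move=> pf pg; have pLC : pint p (LC le f) by apply/mpintP.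
by rewrite pi_pB ?pi_pZ ?pi_pM ?pi_pX ?mpintZ ?mpintM ?mpintX.
Qed.

End ReductionStep.

Section GoodPrime.
Variables (sigma : rel 'X_{1..n}) (I : {mpoly rat[n]} -> Prop) (Gs : seq {mpoly rat[n]}).
Hypotheses (sigma_to : term_ordering sigma) (I_ideal : is_ideal I).
Hypotheses (GBs : reduced_GB sigma I Gs) (Gs_pint : all mpint Gs).

Local Notation Ip := (I_p p Gs).

Lemma Ip_ideal : is_ideal Ip.
Proof. exact: ideal_gen_ideal. Qed.

Lemma pi_p_ideal f : I f -> mpint f -> Ip (pi_p p f).
Proof.
have [Ip0 IpD _] := Ip_ideal; case: GBs => _ GsI GsLT Gs_monic _.
elim/(LT_ind sigma_to): f => [|f f0 IHf If pf]; first by rewrite pi_p0.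
have [g gG dvd_gf] := GsLT f If f0; have [_ LCg] := Gs_monic g gG.
have pg := allP Gs_pint g gG.
set c := red_rat p (LC sigma f); set a := (LT sigma f - LT sigma g)%MM.
rewrite -[pi_p p f](subrK (c *: ('X_[a] * pi_p p g))).
rewrite -pi_p_rstep //; apply: IpD; last by rewrite scalerAl; apply/ideal_gen_mul/map_f.
have [->|h0] := eqVneq (rstep sigma f g) 0; first by rewrite pi_p0.
apply: (IHf _ h0 (LT_rstep sigma_to LCg dvd_gf h0)); last exact: mpint_rstep.
exact: rstep_ideal I_ideal If (GsI g gG).
Qed.

Lemma lift_Ip (f' : {mpoly 'F_p[n]}) : Ip f' -> exists f, [/\ I f, mpint f & pi_p p f = f'].
Proof.
case=> h ->; set Gp := map (pi_p p) Gs; have sz : size Gp = size Gs by rewrite size_map.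
have GsG (i : 'I_(size Gp)) : Gs`_i \in Gs by rewrite mem_nth // -sz.
have pGi (i : 'I_(size Gp)) : mpint (lift_Fp (h i) * Gs`_i).
  by rewrite mpintM ?mpint_lift_Fp ?(allP Gs_pint _ (GsG i)).
exists (\sum_(i < size Gp) lift_Fp (h i) * Gs`_i); split; first last.
- rewrite pi_p_sum => [|i _]; last exact: pGi.
  apply: eq_bigr => i _.
  rewrite pi_pM ?mpint_lift_Fp ?pi_p_lift_Fp ?(allP Gs_pint _ (GsG i)) //.
  by rewrite (nth_map 0) // -sz.
- by apply: mpint_sum => i _; apply: pGi.
case: I_ideal GBs => I0 ID IM [_ GsI _ _ _].
by apply: (big_ind I) => // i _; apply/IM/GsI.
Qed.

Section OtherOrdering.
Variables (tau : rel 'X_{1..n}) (Gt : seq {mpoly rat[n]}).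
Hypotheses (tau_to : term_ordering tau) (GBt : reduced_GB tau I Gt).

Lemma LT_of_Ip_pint g : g \in Gt -> mpint g -> LT_of tau Ip (LT tau g).
Proof.
case: GBt => _ GtI _ Gt_monic _ gG pg; have [_ LCg] := Gt_monic g gG.
have [pig0 <-] : pi_p p g != 0 /\ LT tau (pi_p p g) = LT tau g.
  by apply: LT_pi_p; rewrite // LCg red_rat1 oner_neq0.
by exists (pi_p p g); split => //; apply: pi_p_ideal (GtI g gG) pg.
Qed.

Lemma LT_of_I_pi_p f : all mpint Gt -> I f -> mpint f -> pi_p p f != 0 ->
  LT_of tau I (LT tau (pi_p p f)).
Proof.
move=> Gt_pint; case: GBt => _ GtI GtLT Gt_monic _.
elim/(LT_ind tau_to): f => [|f f0 IHf If pf pif0]; first by rewrite pi_p0 eqxx.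
have [LCf0|LCf_neq0] := eqVneq (red_rat p (LC tau f)) 0; last first.
  by exists f; split => //; rewrite (LT_pi_p tau_to LCf_neq0).2.
have [g gG dvd_gf] := GtLT f If f0; have [_ LCg] := Gt_monic g gG.
have pg := allP Gt_pint g gG.
have pih : pi_p p (rstep tau f g) = pi_p p f.
  by rewrite pi_p_rstep // LCf0 scale0r subr0.
have h0 : rstep tau f g != 0 by apply: contraNneq pif0 => h0; rewrite -pih h0 pi_p0.
rewrite -pih; apply: (IHf _ h0 (LT_rstep tau_to LCg dvd_gf h0)); last by rewrite pih.
  exact: rstep_ideal I_ideal If (GtI g gG).
exact: mpint_rstep.
Qed.

Lemma LT_of_I_iff_Ip : all mpint Gt -> forall m, LT_of tau I m <-> LT_of tau Ip m.
Proof.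
move=> Gt_pint m; split=> [Im|[f' [Ipf' f'0 <-]]].
  have [g gG dvd_gm] := GB_dvd GBt Im.
  have Ip_g := LT_of_Ip_pint gG (allP Gt_pint g gG).
  exact: (LT_of_dvd tau_to Ip_ideal Ip_g dvd_gm).
have [f [If pf fE]] := lift_Ip Ipf'; rewrite -fE in f'0 *.
exact: LT_of_I_pi_p.
Qed.

Lemma exists_LT_Ip_tail g : I g -> LC tau g = 1 -> ~~ mpint g ->
  exists u, [/\ LT_of tau Ip u, u \in msupp g & tlt tau u (LT tau g)].
Proof.
move=> Ig LCg g_bad; have [k [ph k_bad]] := exists_bad_scale g_bad.
set h := p%:R ^+ k.+1 *: g in ph.
have pih0 : pi_p p h != 0 by rewrite /h exprS -scalerA pi_p_scale_neq0 // scalerA -exprS.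
have h_g u : u \in msupp (pi_p p h) -> u \in msupp g by move/msupp_pi_p/msuppZ_le.
have LTh := LT_mem tau_to pih0.
exists (LT tau (pi_p p h)); split; last 1 first.
- rewrite /tlt LT_max ?h_g //=; apply: contraTneq LTh => ->.
  rewrite mcoeff_msupp mcoeff_pi_p mcoeffZ.
  move: LCg; rewrite /LC => ->; rewrite mulr1 -natrX red_rat_nat natrX.
  by rewrite pchar_Fp_0 // expr0n eqxx.
- exists (pi_p p h); split => //; apply: pi_p_ideal ph.
  by rewrite /h -mul_mpolyC; case: I_ideal => _ _; apply.
- exact: h_g.
Qed.

Lemma exists_min_bad : ~~ all mpint Gt -> exists g0, [/\ g0 \in Gt, ~~ mpint g0 &
  forall g, g \in Gt -> ~~ mpint g -> tau (LT tau g0) (LT tau g)].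
Proof.
case/allPn=> g gG g_bad.
pose P m := exists g, [/\ g \in Gt, ~~ mpint g & LT tau g = m].
have P_g : P (LT tau g) by exists g.
have [_ [[g0 [g0G g0_bad <-]] g0_min]] := exists_tmin tau_to (ex_intro P _ P_g).
by exists g0; split=> // g' g'G g'_bad; apply: g0_min; exists g'.
Qed.

Lemma exists_new_min_gen_lt_bad g : g \in Gt -> ~~ mpint g ->
  exists v, [/\ min_gen tau Ip v, ~ min_gen tau I v & tlt tau v (LT tau g)].
Proof.
move=> gG g_bad; case: GBt => _ GtI _ Gt_monic _; have [_ LCg] := Gt_monic g gG.
have [u [Ipu ug lt_ug]] := exists_LT_Ip_tail (GtI g gG) LCg g_bad.
have [v [min_v dvd_vu]] := exists_min_gen Ipu.
exists v; split=> //; last exact: (le_tlt_trans tau_to (to_dvd tau_to dvd_vu) lt_ug).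
case=> Iv _; apply: (GB_tail_notin tau_to GBt gG ug lt_ug).
exact: (LT_of_dvd tau_to I_ideal Iv dvd_vu).
Qed.

Lemma exists_new_min_gen_lt_lost g0 : g0 \in Gt -> ~~ mpint g0 ->
  (forall g, g \in Gt -> ~~ mpint g -> tau (LT tau g0) (LT tau g)) ->
  forall t, min_gen tau I t -> ~ min_gen tau Ip t ->
  exists v, [/\ min_gen tau Ip v, ~ min_gen tau I v & tlt tau v t].
Proof.
move=> g0G g0_bad g0_min t It Ipt_lost.
have [le_g0t|lt_tg0] := boolP (tau (LT tau g0) t).
  have [v [min_v new_v lt_v]] := exists_new_min_gen_lt_bad g0G g0_bad.
  by exists v; split=> //; apply: (tlt_le_trans tau_to lt_v le_g0t).
(* Below LT g0 every element of G_tau is p-integral, so t stays a leading term mod p. *)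
have [g gG LTg] := min_gen_GB GBt It.
have pg : mpint g by apply: contraNT lt_tg0 => g_bad; rewrite -LTg g0_min.
have Ipt : LT_of tau Ip t by rewrite -LTg; apply: LT_of_Ip_pint.
have [v [min_v dvd_vt ne_vt]] := not_min_gen_dvd tau_to Ipt Ipt_lost.
exists v; split=> //; last by rewrite /tlt (to_dvd tau_to dvd_vt).
by case=> Iv _; case: It => _ /(_ v Iv dvd_vt) vt; rewrite vt eqxx in ne_vt.
Qed.

Lemma O_eq_of_pint OI Op : all mpint Gt -> is_O tau I OI -> is_O tau Ip Op -> Op = OI.
Proof.
move=> Gt_pint OI_spec Op_spec; apply: (is_O_eq tau_to Op_spec OI_spec).
by apply: min_gen_ext => m; rewrite LT_of_I_iff_Ip.
Qed.

Lemma O_prec_of_bad OI Op : ~~ all mpint Gt -> is_O tau I OI -> is_O tau Ip Op ->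
  prec_tau tau Op OI /\ ~ proper_prefix OI Op.
Proof.
move=> Gt_bad OI_spec Op_spec; have [g0 [g0G g0_bad g0_min]] := exists_min_bad Gt_bad.
have lost_above := exists_new_min_gen_lt_lost g0G g0_bad g0_min.
apply: (is_O_prec tau_to OI_spec Op_spec _ lost_above).
have [v [Ipv Iv lt_v]] := exists_new_min_gen_lt_bad g0G g0_bad.
by exists v; split=> //; exists (LT tau g0); first exact: (GB_min_gen tau_to GBt g0G).
Qed.

End OtherOrdering.

End GoodPrime.

End ModP.

Local Close Scope ring_scope.

Theorem theorem4p13 (n : nat) (sigma tau : rel 'X_{1..n})
    (I : {mpoly rat[n]} -> Prop) (p : nat) (Gsigma Gtau : seq {mpoly rat[n]})
    (OI : seq 'X_{1..n}) (Op : seq 'X_{1..n}) :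
  term_ordering sigma -> term_ordering tau ->
  is_ideal I -> nonzero_ideal I -> prime p ->
  reduced_GB sigma I Gsigma -> ~~ (p %| den_seq Gsigma) ->
  reduced_GB tau I Gtau ->
  is_O tau I OI -> is_O tau (I_p p Gsigma) Op ->
  (~~ (p %| den_seq Gtau) -> Op = OI) /\
  (p %| den_seq Gtau -> prec_tau tau Op OI /\ ~ proper_prefix OI Op).
Proof.
move=> sigma_to tau_to I_ideal _ p_pr GBs.
rewrite dvd_den_seq // negbK => Gs_pint GBt OI_spec Op_spec.
split=> [|Gt_bad].
  rewrite dvd_den_seq // negbK => Gt_pint.
  exact: (O_eq_of_pint p_pr sigma_to I_ideal GBs Gs_pint tau_to GBt).
rewrite dvd_den_seq // in Gt_bad.
exact: (O_prec_of_bad p_pr sigma_to I_ideal GBs Gs_pint tau_to GBt).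
Qed.
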